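(* Let $f\in\ell_1(\mathbb{Z})$ be non-negative, let $m,N\in\mathbb{N}$, $p\in(0,1)$, $H,\mu>0$, and assume $\|f\|_\infty\leq 2H$ and that for every integer interval $I$ of cardinality $N$, $|\{t\in I:\ f(t)\geq H\}|\leq\mu N$. Let $x_1,\dots,x_m$ be any integers and set $\widetilde f(t)=\mathbb{E}_b f(t+b_1x_1+\dots+b_mx_m)$, where $b=(b_1,\dots,b_m)$ has independent Bernoulli($p$) components. Then for every integer interval $J$ of cardinality $N$, $$|\{t\in J:\ \widetilde f(t)\geq\sqrt2 H\}|\leq \mu N/(\sqrt2-1).$$
   Context: A Bernoulli($p$) random variable takes value $1$ with probability $p$ and $0$ with probability $1-p$. *)

From HB Require Import structures.
From mathcomp Require Import all_boot all_order all_algebra.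
From mathcomp Require Import reals.
Set Implicit Arguments. Unset Strict Implicit. Unset Printing Implicit Defensive.
Import Order.TTheory GRing.Theory Num.Theory.
Local Open Scope ring_scope.

Definition l1_int (R : realType) (f : int -> R) : Prop :=
  exists B : R, forall n : nat,
    \sum_(k < n) (`|f (k%:Z)| + `|f (- (k.+1)%:Z)|) <= B.

Definition count_in_interval (P : pred int) (a : int) (N : nat) : nat :=
  count (fun k : nat => P (a + k%:Z)) (iota 0 N).

Definition bern_weight (R : realType) (p : R) (m : nat) (b : {ffun 'I_m -> bool}) : R :=
  \prod_(i < m) (if b i then p else 1 - p).

Definition ftilde (R : realType) (p : R) (m : nat) (x : 'I_m -> int) (f : int -> R)
    (t : int) : R :=
  \sum_(b : {ffun 'I_m -> bool})
     bern_weight p b * f (t + \sum_(i < m) (if b i then x i else 0)).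

From HB Require Import structures.
From mathcomp Require Import all_boot all_order all_algebra.
From mathcomp Require Import reals lra.
Set Implicit Arguments. Unset Strict Implicit. Unset Printing Implicit Defensive.
Import Order.TTheory GRing.Theory Num.Theory.
Local Open Scope ring_scope.

(* Since 0 <= f <= 2H, we have f <= H + H 1{f >= H}; averaging over b gives
   ftilde <= H + H E, where E(t) is the probability that f(t + b.x) >= H.
   Where ftilde >= sqrt 2 H this forces E >= sqrt 2 - 1, so by Markov the
   number of such t in J is at most (sum over J of E) / (sqrt 2 - 1).  That sum
   is the b-average of the number of large values of f on the translate
   J + b.x, which is at most mu N. *)

Lemma count_in_intervalE (R : numDomainType) (P : pred int) a N :
  (count_in_interval P a N)%:R = \sum_(k <- iota 0 N) ((P (a + k%:Z))%:R : R).
Proof.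
rewrite /count_in_interval -sum1_count natr_sum big_mkcond /=.
by apply: eq_bigr => k _; case: (P _).
Qed.

Lemma le_level_indicator (R : realFieldType) (H y : R) :
  y <= 2 * H -> y <= H + H * (H <= y)%R%:R.
Proof. by case: (lerP H y) => /= hy; rewrite ?mulr1 ?mulr0 ?addr0 //; lra. Qed.

Lemma indicator_le_div (R : realFieldType) (b : bool) (c y : R) :
  0 < c -> 0 <= y -> (b -> c <= y) -> b%:R <= y / c.
Proof.
move=> c_gt0 y_ge0; case: b => [/(_ isT) cy | _] /=.
  by rewrite ler_pdivlMr // mul1r.
by rewrite divr_ge0 // ltW.
Qed.

Section BernoulliAverage.
Variables (R : realType) (p : R) (m : nat) (x : 'I_m -> int).

Lemma sum_bern_weight : \sum_(b : {ffun 'I_m -> bool}) bern_weight p b = 1.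
Proof.
rewrite /bern_weight -(bigA_distr_bigA (fun i (bi : bool) => if bi then p else 1 - p)).
by apply: big1 => i _; rewrite big_bool /= subrKC.
Qed.

Lemma ftilde_affine (c d : R) (g : int -> R) t :
  ftilde p x (fun u => c + d * g u) t = c + d * ftilde p x g t.
Proof.
rewrite /ftilde mulr_sumr -[c in RHS]mulr1 -sum_bern_weight mulr_sumr -big_split.
by apply: eq_bigr => b _ /=; rewrite mulrDr mulrCA mulrC.
Qed.

Hypothesis p01 : 0 <= p <= 1.

Lemma bern_weight_ge0 (b : {ffun 'I_m -> bool}) : 0 <= bern_weight p b.
Proof.
case/andP: p01 => p_ge0 p_le1.
by apply: prodr_ge0 => i _; case: (b i); rewrite ?subr_ge0.
Qed.

Lemma ftilde_ge0 (g : int -> R) t : (forall u, 0 <= g u) -> 0 <= ftilde p x g t.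
Proof. by move=> g_ge0; apply: sumr_ge0 => b _; rewrite mulr_ge0 ?bern_weight_ge0. Qed.

Lemma ler_ftilde (g h : int -> R) t :
  (forall u, g u <= h u) -> ftilde p x g t <= ftilde p x h t.
Proof. by move=> gh; apply: ler_sum => b _; rewrite ler_wpM2l ?bern_weight_ge0. Qed.

Lemma interval_sum_ftilde_le (g : int -> R) N B :
  (forall a, \sum_(k <- iota 0 N) g (a + k%:Z) <= B) ->
  forall a, \sum_(k <- iota 0 N) ftilde p x g (a + k%:Z) <= B.
Proof.
move=> gB a; rewrite /ftilde exchange_big /=.
rewrite -[B]mul1r -sum_bern_weight mulr_suml; apply: ler_sum => b _.
rewrite -mulr_sumr ler_wpM2l ?bern_weight_ge0 //.
rewrite (eq_bigr (fun k => g (a + \sum_(i < m) (if b i then x i else 0) + k%:Z))) ?gB //.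
by move=> k _; rewrite addrAC.
Qed.

End BernoulliAverage.

Theorem lemma4p10 (R : realType) (f : int -> R) (m N : nat) (p H mu : R)
  (x : 'I_m -> int)
  (hf0 : forall t, 0 <= f t) (hl1 : l1_int f)
  (hp : 0 < p < 1) (hH : 0 < H) (hmu : 0 < mu)
  (hinf : forall t, `|f t| <= 2 * H)
  (hI : forall a : int,
     (count_in_interval (fun t => H <= f t) a N)%:R <= mu * N%:R) :
  forall a : int,
    (count_in_interval (fun t => Num.sqrt 2 * H <= ftilde p x f t) a N)%:R
      <= mu * N%:R / (Num.sqrt 2 - 1).
Proof.
move=> a; have p01 : 0 <= p <= 1 by case/andP: hp => *; apply/andP; split; lra.
set c := Num.sqrt 2 - 1.
have c_gt0 : 0 < c by rewrite subr_gt0 -{1}sqrtr1 ltr_sqrt //; lra.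
set E := fun t => ((H <= f t)%R%:R : R).
have E_ge0 u : 0 <= E u by rewrite ler0n.
have f_le u : f u <= H + H * E u.
  by apply: le_level_indicator; rewrite -[f u]ger0_norm.
have level t : Num.sqrt 2 * H <= ftilde p x f t -> c <= ftilde p x E t.
  move=> ht; have := le_trans ht (ler_ftilde x p01 t f_le).
  rewrite ftilde_affine => hE; rewrite -(ler_pM2l hH) /c; lra.
rewrite count_in_intervalE.
apply: (@le_trans _ _ (\sum_(k <- iota 0 N) ftilde p x E (a + k%:Z) / c)).
  apply: ler_sum => k _.
  exact: indicator_le_div c_gt0 (ftilde_ge0 x p01 _ E_ge0) (level _).
rewrite -mulr_suml ler_pM2r ?invr_gt0 //.
apply: interval_sum_ftilde_le => // b.
by have := hI b; rewrite count_in_intervalE.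
Qed.
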